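(* Let $G$ be a finite group of order $n$ and $\ell$ an integer. If the exponent of $G$ does not divide $\ell$, then $$\frac{|\{g\in G:g^\ell=1\}|}{n}\le 1-\frac1{\sqrt{2n}}.$$ *)

From mathcomp Require Import all_boot all_order all_algebra all_fingroup all_solvable.
From mathcomp Require Import all_reals.
Set Implicit Arguments. Unset Strict Implicit. Unset Printing Implicit Defensive.

Definition expgz (gT : finGroupType) (g : gT) (l : int) : gT :=
  match l with
  | Posz m => (g ^+ m)%g
  | Negz m => ((g ^+ m.+1)^-1)%g
  end.

From mathcomp Require Import all_boot all_order all_algebra all_fingroup all_solvable.
From mathcomp Require Import all_reals.
From mathcomp Require Import ring.
Import Order.TTheory GRing.Theory Num.Theory.

(* Let m = |l|, T the set of g with g ^+ m != 1, and x in T (it exists since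
   exp G does not divide m).
   The class of x lies in T, and in the centralizer C of x the translation
   g |-> g x sends the solutions of g ^+ m = 1 into T, so |C| <= 2|T|.
   Hence |G| = |C| |x^G| <= 2|T|^2, i.e. |T|/|G| >= 1/sqrt(2|G|). *)

Local Open Scope group_scope.

Lemma expgz_eq1 {gT : finGroupType} (g : gT) (l : int) :
  (expgz g l == 1) = (g ^+ `|l|%N == 1).
Proof. by case: l => m //=; rewrite invg_eq1. Qed.

Section NonRoots.

Variables (gT : finGroupType) (G : {group gT}) (m : nat).

Let T := [set g in G | g ^+ m != 1].

Lemma exponent_ndvd_nonroot :
  ~~ (exponent G %| m) -> exists2 x, x \in G & x ^+ m != 1.
Proof.
move=> ndvd; apply/exists_inP; apply: contraNT ndvd.
rewrite negb_exists_in => /forall_inP all_roots.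
by apply/exponentP => y yG; apply/eqP/negbNE/all_roots.
Qed.

Section Witness.

Variable x : gT.
Hypotheses (xG : x \in G) (xm : x ^+ m != 1).

Lemma card_class_le_nonroots : #|x ^: G| <= #|T|.
Proof.
apply/subset_leq_card/subsetP => _ /imsetP[y yG ->].
by rewrite inE groupJ //= -conjXg conjg_eq1.
Qed.

Lemma card_cent1_roots_le :
  #|[set g in 'C_G[x] | g ^+ m == 1]| <= #|T :&: 'C_G[x]|.
Proof.
rewrite -(card_imset _ (mulIg x)); apply/subset_leq_card/subsetP.
move=> _ /imsetP[g /setIdP[gC /eqP gm1] ->].
have [gG /cent1P cgx] := setIP gC.
have xC : x \in 'C_G[x] by rewrite inE xG cent1id.
by rewrite inE [_ \in 'C_G[x]]groupM // andbT inE groupM //= expgMn // gm1 mul1g.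
Qed.

Lemma card_cent1_le_nonroots : #|'C_G[x]| <= 2 * #|T|.
Proof.
set C := 'C_G[x]; set S := [set g in C | g ^+ m == 1].
have cover : C \subset (T :&: C) :|: S.
  apply/subsetP => g gC; have /setIP[gG _] := gC.
  by rewrite in_setU in_setI gC andbT [g \in S]inE gC inE gG /=; case: eqP.
have TC_le : #|T :&: C| <= #|T| by rewrite subset_leq_card ?subsetIl.
rewrite (leq_trans (subset_leq_card cover)) // (leq_trans (leq_card_setU _ _)) //.
by rewrite mul2n -addnn leq_add // (leq_trans card_cent1_roots_le).
Qed.

End Witness.

Lemma card_le_double_sq_nonroots : ~~ (exponent G %| m) -> (#|G| <= 2 * #|T| ^ 2)%N.
Proof.
case/exponent_ndvd_nonroot => x xG xm.
rewrite -(Lagrange (subsetIl G 'C[x])) index_cent1 expnS expn1 mulnA.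
by rewrite leq_mul ?card_cent1_le_nonroots ?card_class_le_nonroots.
Qed.

End NonRoots.

Lemma card_roots_add_nonroots {gT : finGroupType} (G : {group gT}) (l : int) :
  #|[set g in G | expgz g l == 1]| + #|[set g in G | g ^+ `|l|%N != 1]| = #|G|.
Proof.
rewrite -(cardsID [set g | g ^+ `|l|%N == 1] G); congr (_ + _).
  by apply: eq_card => g; rewrite !inE expgz_eq1 andbC.
by apply: eq_card => g; rewrite !inE andbC.
Qed.

Local Open Scope ring_scope.

Lemma inv_sqrt_double_le_div (R : rcfType) (n t : R) :
  0 < n -> 0 <= t -> n <= 2 * t ^+ 2 -> 1 / Num.sqrt (2 * n) <= t / n.
Proof.
move=> n_gt0 t_ge0 n_le.
have n2_gt0 : 0 < 2 * n by rewrite mulr_gt0.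
have sqrt_le : Num.sqrt (2 * n) <= 2 * t.
  rewrite -[leRHS]ger0_norm ?mulr_ge0 // -sqrtr_sqr ler_sqrt ?sqr_ge0 //.
  by rewrite exprMn -mulrA ler_pM2l.
have sqrt_gt0 : 0 < Num.sqrt (2 * n) by rewrite sqrtr_gt0.
have sqrt_sq : Num.sqrt (2 * n) ^+ 2 = 2 * n by rewrite sqr_sqrtr ?ltW.
have -> : 1 / Num.sqrt (2 * n) = Num.sqrt (2 * n) / (2 * n).
  rewrite -[X in _ = _ / X]sqrt_sq.
  by field; rewrite gt_eqF.
have -> : t / n = 2 * t / (2 * n) by field; rewrite gt_eqF.
by rewrite ler_pM2r ?invr_gt0.
Qed.

Theorem theorem2p9 (R : realType) (gT : finGroupType) (G : {group gT}) (l : int) :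
  ~~ ((exponent G)%:Z %| l)%Z ->
  (#|[set g in G | expgz g l == 1%g]|%:R / #|G|%:R : R)
    <= 1 - 1 / Num.sqrt (2 * #|G|%:R).
Proof.
rewrite dvdzE absz_nat => /card_le_double_sq_nonroots le_n.
set t := #|[set g in G | (g ^+ `|l|)%g != 1%g]| in le_n.
have n_gt0 : (0 : R) < #|G|%:R by rewrite ltr0n cardG_gt0.
have -> : #|[set g in G | expgz g l == 1%g]|%:R = #|G|%:R - t%:R :> R.
  by rewrite -(card_roots_add_nonroots G l) natrD addrK.
rewrite mulrBl divff ?gt_eqF // lerD2l lerN2.
by rewrite inv_sqrt_double_le_div // -natrX -natrM ler_nat.
Qed.
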